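(* Let $p>1$, $q=\frac{p}{p-1}$ and $0<a<b$. Then $$\left|\frac{I(a,b)}{G(a,b)}\right|\le \exp\!\left(\frac{b-a}{2}\,\bigl(H(|a|^q,|b|^q)\bigr)^{-1/q}\right).$$
   Context: For positive $x,y$: the geometric mean is $G(x,y)=\sqrt{xy}$; the harmonic mean is $H(x,y)=\frac{2xy}{x+y}$; the identric mean is $I(x,y)=x$ if $x=y$ and $I(x,y)=\frac1e\left(\frac{y^y}{x^x}\right)^{\frac{1}{y-x}}$ if $x\ne y$. *)

From Stdlib Require Import Reals.
Open Scope R_scope.

Definition Gmean (x y : R) : R := sqrt (x * y).

Definition Hmean (x y : R) : R := 2 * x * y / (x + y).

Definition Imean (x y : R) : R :=
  if Req_EM_T x y then x
  else / exp 1 * Rpower (Rpower y y / Rpower x x) (1 / (y - x)).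

(** With [r = sqrt (b/a)], [ln (I/G) = (a+b)/(2(b-a)) ln (b/a) - 1], and the
    estimate [ln x <= 2 (sqrt x - 1)] bounds it by [r (r-1)/(r+1) <= (r^2-1)/4
    = (b-a)/(4a)].  On the other side the harmonic mean is at most twice its
    smaller argument, so [H(a^q,b^q)^(1/q) <= 2^(1/q) a <= 2a] because [q >= 1],
    and the right-hand exponent is at least [(b-a)/(4a)] as well. *)

From Stdlib Require Import Reals Lra Psatz.
Open Scope R_scope.

Lemma exp_le_exp x y : x <= y -> exp x <= exp y.
Proof.
intros [Hlt | ->]; [left; apply exp_increasing; exact Hlt | apply Rle_refl].
Qed.

Lemma ln_le_sub1 x : 0 < x -> ln x <= x - 1.
Proof.
intros Hx; pose proof (exp_ineq1_le (ln x)) as H; rewrite exp_ln in H; lra.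
Qed.

Lemma ln_le_twice_sqrt_sub1 x : 0 < x -> ln x <= 2 * (sqrt x - 1).
Proof.
intros Hx.
assert (Hs : 0 < sqrt x) by (apply sqrt_lt_R0; exact Hx).
rewrite <- (sqrt_sqrt x) at 1 by lra.
rewrite ln_mult by exact Hs.
pose proof (ln_le_sub1 _ Hs); lra.
Qed.

Lemma ln_div x y : 0 < x -> 0 < y -> ln (x / y) = ln x - ln y.
Proof.
intros Hx Hy; unfold Rdiv; rewrite ln_mult, ln_Rinv; try lra.
apply Rinv_0_lt_compat; exact Hy.
Qed.

Lemma Gmean_exp a b : 0 < a -> 0 < b -> Gmean a b = exp ((ln a + ln b) / 2).
Proof.
intros Ha Hb; unfold Gmean.
rewrite <- Rpower_sqrt, <- ln_mult by nra.
unfold Rpower, Rdiv; f_equal; ring.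
Qed.

Lemma Imean_exp a b : 0 < a -> 0 < b -> a <> b ->
  Imean a b = exp ((b * ln b - a * ln a) / (b - a) - 1).
Proof.
intros Ha Hb Hab; unfold Imean.
destruct (Req_EM_T a b) as [E | _]; [contradiction |].
unfold Rpower; rewrite ln_div, !ln_exp by apply exp_pos.
rewrite <- exp_Ropp, <- exp_plus; f_equal; unfold Rdiv; ring.
Qed.

Lemma Imean_div_Gmean a b : 0 < a -> a < b ->
  Imean a b / Gmean a b = exp ((a + b) / (2 * (b - a)) * ln (b / a) - 1).
Proof.
intros Ha Hab.
rewrite Imean_exp, Gmean_exp by lra.
unfold Rdiv at 1; rewrite <- exp_Ropp, <- exp_plus, ln_div by lra.
f_equal; field; lra.
Qed.

Lemma ln_Imean_div_Gmean_le a b : 0 < a -> a < b ->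
  (a + b) / (2 * (b - a)) * ln (b / a) - 1 <= (b - a) / (4 * a).
Proof.
intros Ha Hab.
assert (Hba : 0 < b / a) by (apply Rdiv_lt_0_compat; lra).
set (r := sqrt (b / a)).
assert (Hb : b = a * (r * r)) by (unfold r; rewrite sqrt_sqrt by lra; field; lra).
assert (Hr : 1 < r).
{ destruct (Rle_lt_dec r 1) as [Hr | Hr]; [| exact Hr].
  assert (0 <= r) by apply sqrt_pos.
  assert (r * r <= 1) by nra. nra. }
assert (Hc : 0 < (a + b) / (2 * (b - a))) by (apply Rdiv_lt_0_compat; lra).
apply Rle_trans with ((a + b) / (2 * (b - a)) * (2 * (r - 1)) - 1).
- apply Rplus_le_compat_r, Rmult_le_compat_l; [lra |].
  apply ln_le_twice_sqrt_sub1; exact Hba.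
- (* both sides are rational in [r]; the difference is [(r-1)^3 / (4 (r+1))] *)
  rewrite Hb.
  replace ((a + a * (r * r)) / (2 * (a * (r * r) - a)) * (2 * (r - 1)) - 1)
    with (r * (r - 1) / (r + 1)) by (field; nra).
  replace ((a * (r * r) - a) / (4 * a)) with ((r * r - 1) / 4) by (field; lra).
  apply Rmult_le_reg_r with (4 * (r + 1)); [lra |].
  replace (r * (r - 1) / (r + 1) * (4 * (r + 1))) with (4 * r * (r - 1)) by (field; lra).
  replace ((r * r - 1) / 4 * (4 * (r + 1))) with ((r - 1) * ((r + 1) * (r + 1))) by field.
  assert (0 <= (r - 1) * ((r - 1) * (r - 1))) by (apply Rmult_le_pos; nra).
  nra.
Qed.

Lemma Hmean_pos x y : 0 < x -> 0 < y -> 0 < Hmean x y.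
Proof. intros Hx Hy; unfold Hmean; apply Rdiv_lt_0_compat; nra. Qed.

Lemma Hmean_le_twice_l x y : 0 < x -> 0 < y -> Hmean x y <= 2 * x.
Proof.
intros Hx Hy; unfold Hmean.
apply Rmult_le_reg_r with (x + y); [lra |].
unfold Rdiv; rewrite Rmult_assoc, Rinv_l by lra; nra.
Qed.

Lemma Rpower_Hmean_ge q a b : 1 <= q -> 0 < a -> 0 < b ->
  / (2 * a) <= Rpower (Hmean (Rpower a q) (Rpower b q)) (- (1 / q)).
Proof.
intros Hq Ha Hb.
assert (HA : 0 < Rpower a q) by apply exp_pos.
assert (HB : 0 < Rpower b q) by apply exp_pos.
assert (Hq' : 0 <= 1 / q <= 1).
{ split; [left; apply Rdiv_lt_0_compat |]; try lra.
  apply Rmult_le_reg_r with q; [lra |]; unfold Rdiv; rewrite Rmult_assoc, Rinv_l; lra. }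
assert (Hroot : Rpower (Hmean (Rpower a q) (Rpower b q)) (1 / q) <= 2 * a).
{ apply Rle_trans with (Rpower (2 * Rpower a q) (1 / q)).
  { apply Rle_Rpower_l; [lra |]. split; [apply Hmean_pos |
      apply Hmean_le_twice_l]; assumption. }
  rewrite <- Rpower_mult_distr, Rpower_mult by lra.
  replace (q * (1 / q)) with 1 by (field; lra).
  rewrite Rpower_1 by exact Ha.
  apply Rmult_le_compat_r; [lra |].
  rewrite <- (Rpower_1 2) at 2 by lra.
  apply Rle_Rpower; lra. }
rewrite Rpower_Ropp.
apply Rinv_le_contravar; [apply exp_pos | exact Hroot].
Qed.

Theorem proposition2 (p q a b : R) :
  1 < p -> q = p / (p - 1) -> 0 < a -> a < b ->
  Rabs (Imean a b / Gmean a b) <=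
  exp ((b - a) / 2 *
       Rpower (Hmean (Rpower (Rabs a) q) (Rpower (Rabs b) q)) (- (1 / q))).
Proof.
intros Hp Hq Ha Hab.
assert (Hq1 : 1 <= q).
{ subst q; apply Rmult_le_reg_r with (p - 1); [lra |].
  unfold Rdiv; rewrite Rmult_assoc, Rinv_l; lra. }
rewrite (Rabs_pos_eq a), (Rabs_pos_eq b) by lra.
rewrite Imean_div_Gmean, Rabs_pos_eq by (try left; try apply exp_pos; lra).
apply exp_le_exp, Rle_trans with ((b - a) / (4 * a)).
- apply ln_Imean_div_Gmean_le; lra.
- replace ((b - a) / (4 * a)) with ((b - a) / 2 * / (2 * a)) by (field; lra).
  apply Rmult_le_compat_l; [lra |].
  apply Rpower_Hmean_ge; lra.
Qed.
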